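(* For $\alpha\in\Sigma_0^+$ put $x_\alpha=\tfrac14(m_{\alpha/2}+2)$ and $y_\alpha=\tfrac14(m_{\alpha/2}+2m_\alpha)$. Let $\mu\in\Lambda^+$. Then $\mu_\alpha\in\mathbb Z_{\geq0}$ for all $\alpha\in\Sigma_0^+$, and \[ \mathbf c(\mu+\rho)=\prod_{\alpha\in\Sigma_0^+}\left(\Big(1+\frac{x_\alpha}{\rho_\alpha}\Big)\Big(1+\frac{y_\alpha}{\rho_\alpha}\Big)\right)^{-\mu_\alpha}\cdot\prod_{j=0}^{\mu_\alpha-1}\frac{\big(1+\frac{j}{2\rho_\alpha}\big)\big(1+\frac{\mu_\alpha+j}{2\rho_\alpha}\big)}{\big(1+\frac{j}{x_\alpha+\rho_\alpha}\big)\big(1+\frac{j}{y_\alpha+\rho_\alpha}\big)}, \] where the inner product over $j$ is interpreted as $1$ when $\mu_\alpha=0$.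
   Context: Standing setup. $G$ is a connected compact semisimple Lie group with Lie algebra $\mathfrak g$, $\theta$ an involutive automorphism, $K$ a closed subgroup with $(G^\theta)_0\subseteq K\subseteq G^\theta$, $M=G/K$ simply connected. $\mathfrak g=\mathfrak k\oplus\mathfrak s$ is the eigenspace decomposition of $\theta$, $\mathfrak a\subseteq\mathfrak s$ is maximal abelian, and a $K$-invariant inner product on $\mathfrak s$ induces a real inner product $\langle\cdot,\cdot\rangle$ on $i\mathfrak a^*$. $\Sigma\subset i\mathfrak a^*$ is the set of restricted roots of $(\mathfrak g_{\mathbb C},\mathfrak a_{\mathbb C})$, $m_\alpha=\dim_{\mathbb C}\mathfrak g_{\mathbb C,\alpha}$ the multiplicity (with $m_\beta=0$ if $\beta\notin\Sigma$), $\Sigma^+$ a positive system, $\Sigma_0^+=\{\alpha\in\Sigma^+:2\alpha\notin\Sigma\}$, and $\rho=\tfrac12\sum_{\alpha\in\Sigma^+}m_\alpha\alpha$. For $\lambda\in\mathfrak a_{\mathbb C}^*$ and $\alpha\in\Sigma$, $\lambda_\alpha=\langle\lambda,\alpha\rangle/\langle\alpha,\alpha\rangle$ (so $\rho_\alpha=\langle\rho,\alpha\rangle/\langle\alpha,\alpha\rangle>0$ for $\alpha\in\Sigma^+$). $\Lambda^+=\{\mu\in i\mathfrak a^*:\mu_\alpha\in\mathbb Z_{\ge0}\ \forall\alpha\in\Sigma^+\}$. The Harish-Chandra $c$-function is $\mathbf c(\lambda)={}'c(\lambda)/{}'c(\rho)$ with \[ {}'c(\lambda)=\prod_{\alpha\in\Sigma_0^+}\frac{2^{-2\lambda_\alpha}\,\Gamma(2\lambda_\alpha)}{\Gamma\big(\lambda_\alpha+\tfrac{m_{\alpha/2}}{4}+\tfrac12\big)\,\Gamma\big(\lambda_\alpha+\tfrac{m_{\alpha/2}}{4}+\tfrac{m_\alpha}{2}\big)}.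 \] *)

From Stdlib Require Import Reals Lra Lia List Arith Factorial Classical ClassicalEpsilon.
Open Scope R_scope.

(* ---------- vectors of i a^* ~ R^r, represented as lists of length r ------ *)
Definition vec := list R.
Definition vzero (r : nat) : vec := repeat 0 r.
Definition vscale (c : R) (v : vec) : vec := map (Rmult c) v.
Definition vadd (u v : vec) : vec := map (fun p => fst p + snd p) (combine u v).
Definition vsub (u v : vec) : vec := map (fun p => fst p - snd p) (combine u v).
Definition ip (u v : vec) : R :=
  fold_right Rplus 0 (map (fun p => fst p * snd p) (combine u v)).

Definition vec_eq_dec : forall u v : vec, {u = v} + {u <> v} :=
  list_eq_dec Req_dec_T.
Definition inb (v : vec) (S : list vec) : bool :=
  if in_dec vec_eq_dec v S then true else false.

Definition lprod {A} (f : A -> R) (l : list A) : R := fold_right Rmult 1 (map f l).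

(* lambda_alpha = <lambda, alpha> / <alpha, alpha> *)
Definition coef (lam a : vec) : R := ip lam a / ip a a.

Definition refl (a b : vec) : vec := vsub b (vscale (2 * coef b a) a).

(* positive system determined by a regular element h *)
Definition posroots (Sigma : list vec) (h : vec) : list vec :=
  filter (fun a => if Rlt_dec 0 (ip a h) then true else false) Sigma.

Definition posroots0 (Sigma : list vec) (h : vec) : list vec :=
  filter (fun a => negb (inb (vscale 2 a) Sigma)) (posroots Sigma h).

Definition rho (r : nat) (Sigma : list vec) (h : vec) (m : vec -> nat) : vec :=
  vscale (1/2) (fold_right vadd (vzero r)
     (map (fun a => vscale (INR (m a)) a) (posroots Sigma h))).

(* Root-system / multiplicity axioms for the restricted root data of the
   compact symmetric space (finite, reduced or not, spanning, with a
   Weyl-invariant positive multiplicity function, m_beta = 0 off Sigma). *)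
Definition restricted_root_data (r : nat) (Sigma : list vec) (h : vec)
    (m : vec -> nat) : Prop :=
  NoDup Sigma /\
  (forall a, In a Sigma -> length a = r /\ a <> vzero r) /\
  (forall v, length v = r -> (forall a, In a Sigma -> ip v a = 0) -> v = vzero r) /\
  (forall a b, In a Sigma -> In b Sigma -> In (refl a b) Sigma) /\
  (forall a b, In a Sigma -> In b Sigma -> exists z : Z, 2 * coef b a = IZR z) /\
  length h = r /\ (forall a, In a Sigma -> ip a h <> 0) /\
  (forall b, (m b > 0)%nat <-> In b Sigma) /\
  (forall a b, In a Sigma -> In b Sigma -> m (refl a b) = m b).

(* Gamma(x) = lim_n n! n^x / (x (x+1) ... (x+n)),  valid for x > 0. *)
Definition gauss_seq (x : R) (n : nat) : R :=
  INR (Factorial.fact n) * Rpower (INR n) x / lprod (fun k => x + INR k) (seq 0 (S n)).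

Definition Gamma (x : R) : R :=
  match excluded_middle_informative (exists l, Un_cv (gauss_seq x) l) with
  | left H => proj1_sig (constructive_indefinite_description _ H)
  | right _ => 0
  end.

Definition cprime (Sigma : list vec) (h : vec) (m : vec -> nat) (lam : vec) : R :=
  lprod (fun a =>
     let la := coef lam a in
     let mh := INR (m (vscale (1/2) a)) in
     Rpower 2 (- 2 * la) * Gamma (2 * la) /
       (Gamma (la + mh / 4 + 1/2) * Gamma (la + mh / 4 + INR (m a) / 2)))
   (posroots0 Sigma h).

Definition cfun (r : nat) (Sigma : list vec) (h : vec) (m : vec -> nat) (lam : vec) : R :=
  cprime Sigma h m lam / cprime Sigma h m (rho r Sigma h m).

Definition Lambda_plus (r : nat) (Sigma : list vec) (h : vec) (mu : vec) : Prop :=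
  length mu = r /\
  forall a, In a (posroots Sigma h) -> exists n : nat, coef mu a = INR n.

From Stdlib Require Import Reals List Lra Lia ClassicalEpsilon.
Open Scope R_scope.

(* The c-function c(lambda) = c'(lambda)/c'(rho) is a product over
   alpha in Sigma_0^+ of one-variable factors
       f(l) = 2^(-2l) Gamma(2l) / (Gamma(l + x) Gamma(l + y)),
   with x = x_alpha, y = y_alpha and l = lambda_alpha.  Since
   (mu + rho)_alpha = K + rho_alpha with K = mu_alpha a natural number, the
   theorem reduces, root by root, to the functional equation
   Gamma(z + n) = Gamma(z) z(z+1)...(z+n-1), which turns f(K + c)/f(c) into
   a quotient of rising factorials, followed by a purely algebraic
   rearrangement of that quotient into the stated product. *)

Lemma exp_monotone x y : x <= y -> exp x <= exp y.
Proof. intros [Hlt | ->]; [left; apply exp_increasing, Hlt | right; reflexivity]. Qed.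

Lemma ln_le_sub1 y : 0 < y -> ln y <= y - 1.
Proof. intros Hy. pose proof (exp_ineq1_le (ln y)). rewrite exp_ln in *; lra. Qed.

Lemma Rpower_pos a b : 0 < Rpower a b.
Proof. apply exp_pos. Qed.

Lemma lprod_app {A} (f : A -> R) l1 l2 : lprod f (l1 ++ l2) = lprod f l1 * lprod f l2.
Proof. unfold lprod; induction l1 as [| a l1 IH]; cbn; [ring | rewrite IH; ring]. Qed.

Lemma lprod_ext_in {A} (f g : A -> R) l :
  (forall a, In a l -> f a = g a) -> lprod f l = lprod g l.
Proof. intros H. unfold lprod. f_equal. apply map_ext_in, H. Qed.

Lemma lprod_mult {A} (f g : A -> R) l :
  lprod (fun a => f a * g a) l = lprod f l * lprod g l.
Proof. unfold lprod; induction l as [| a l IH]; cbn; [ring | rewrite IH; ring]. Qed.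

Lemma lprod_const {A} (c : R) (l : list A) : lprod (fun _ => c) l = c ^ length l.
Proof. unfold lprod; induction l as [| a l IH]; cbn; [ring | rewrite IH; ring]. Qed.

Lemma lprod_pos {A} (f : A -> R) l : (forall a, In a l -> 0 < f a) -> 0 < lprod f l.
Proof.
  induction l as [| a l IH]; intros H; cbn; [lra |].
  apply Rmult_lt_0_compat; [apply H; left; reflexivity |].
  apply IH; intros b Hb; apply H; right; exact Hb.
Qed.

Lemma lprod_div {A} (f g : A -> R) l : (forall a, In a l -> g a <> 0) ->
  lprod f l / lprod g l = lprod (fun a => f a / g a) l.
Proof.
  induction l as [| a l IH]; intros H; cbn; [field |].
  assert (Hl : forall b, In b l -> g b <> 0) by (intros b Hb; apply H; right; exact Hb).
  assert (Hprod : fold_right Rmult 1 (map g l) <> 0).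
  { clear IH H. induction l as [| b l IHl]; cbn; [lra |].
    apply Rmult_integral_contrapositive_currified; [apply Hl; left; reflexivity |].
    apply IHl; intros c Hc; apply Hl; right; exact Hc. }
  unfold lprod in IH. rewrite <- IH by exact Hl.
  field. split; [exact Hprod | apply H; left; reflexivity].
Qed.

Definition rising (z : R) (n : nat) : R := lprod (fun k => z + INR k) (seq 0 n).

Lemma rising_S z n : rising z (S n) = rising z n * (z + INR n).
Proof. unfold rising. rewrite seq_S, lprod_app. cbn. ring. Qed.

Lemma rising_pos z n : 0 < z -> 0 < rising z n.
Proof.
  intros Hz. apply lprod_pos. intros k _. pose proof (pos_INR k). lra.
Qed.

Lemma rising_add z n k : rising z (n + k) = rising z n * rising (z + INR n) k.
Proof.
  induction k as [| k IH].
  - rewrite Nat.add_0_r. cbn. ring.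
  - rewrite Nat.add_succ_r, !rising_S, IH, plus_INR. ring.
Qed.

Lemma rising_shift z n : z * rising (z + 1) n = rising z (S n).
Proof.
  induction n as [| n IH]; [cbn; ring |].
  rewrite rising_S, (rising_S z (S n)), <- IH, S_INR. ring.
Qed.


(* Ratio g(p+2)/g(p+1) of consecutive Gauss terms, with p = n+1 (see
   [gauss_seq_step]); it lies between 1 and a telescoping exponential. *)
Definition gauss_ratio (x p : R) : R := Rpower ((p + 1) / p) x * (p + 1) / (x + (p + 1)).

Lemma gauss_ratio_ge1 x p : 0 < p -> 0 < x -> 1 <= gauss_ratio x p.
Proof.
  intros Hp Hx. unfold gauss_ratio.
  assert (Hln : / (p + 1) <= ln ((p + 1) / p)).
  { assert (E : ln ((p + 1) / p) = - ln (p / (p + 1))).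
    { rewrite <- ln_Rinv by (apply Rdiv_lt_0_compat; lra). f_equal. field. lra. }
    pose proof (ln_le_sub1 (p / (p + 1)) ltac:(apply Rdiv_lt_0_compat; lra)).
    replace (p / (p + 1) - 1) with (- / (p + 1)) in * by (field; lra). lra. }
  assert (Hpow : 1 + x / (p + 1) <= Rpower ((p + 1) / p) x).
  { unfold Rpower. eapply Rle_trans; [apply exp_ineq1_le | apply exp_monotone].
    unfold Rdiv at 1. apply Rmult_le_compat_l; lra. }
  apply Rle_trans with ((1 + x / (p + 1)) * (p + 1) / (x + (p + 1))); [right; field; lra |].
  unfold Rdiv. apply Rmult_le_compat_r; [left; apply Rinv_0_lt_compat; lra |].
  apply Rmult_le_compat_r; lra.
Qed.

(* Upper bound; the exponents telescope, which bounds the Gauss sequence. *)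
Lemma gauss_ratio_le x p : 0 < p -> 0 < x ->
  gauss_ratio x p <= exp (x * (x + 1) * (/ p - / (p + 1))).
Proof.
  intros Hp Hx. unfold gauss_ratio.
  assert (Hq : 0 < (p + 1) / (x + (p + 1))) by (apply Rdiv_lt_0_compat; lra).
  assert (Hpow : Rpower ((p + 1) / p) x <= exp (x * ((p + 1) / p - 1))).
  { apply exp_monotone, Rmult_le_compat_l; [lra |].
    apply ln_le_sub1, Rdiv_lt_0_compat; lra. }
  assert (Hfrac : (p + 1) / (x + (p + 1)) <= exp ((p + 1) / (x + (p + 1)) - 1)).
  { rewrite <- (exp_ln _ Hq) at 1. apply exp_monotone, ln_le_sub1, Hq. }
  assert (Hexp : x * ((p + 1) / p - 1) + ((p + 1) / (x + (p + 1)) - 1) =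
    x * (x + 1) * (/ p - / (p + 1)) - x * (x + 1) * x / (p * (p + 1) * (x + (p + 1))))
    by (field; lra).
  assert (Hrem : 0 <= x * (x + 1) * x / (p * (p + 1) * (x + (p + 1)))).
  { left. apply Rdiv_lt_0_compat; apply Rmult_lt_0_compat;
      try apply Rmult_lt_0_compat; lra. }
  apply Rle_trans with (exp (x * ((p + 1) / p - 1)) * exp ((p + 1) / (x + (p + 1)) - 1)).
  - unfold Rdiv at 1. rewrite Rmult_assoc. fold ((p + 1) / (x + (p + 1))).
    apply Rmult_le_compat; [left; apply Rpower_pos | lra | exact Hpow | exact Hfrac].
  - rewrite <- exp_plus. apply exp_monotone. lra.
Qed.

Lemma gauss_seq_rising x n :
  gauss_seq x n = INR (Factorial.fact n) * Rpower (INR n) x / rising x (S n).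
Proof. reflexivity. Qed.

Lemma gauss_seq_pos x n : 0 < x -> 0 < gauss_seq x n.
Proof.
  intros Hx. rewrite gauss_seq_rising.
  apply Rdiv_lt_0_compat; [| apply rising_pos, Hx].
  apply Rmult_lt_0_compat; [apply lt_0_INR, Factorial.lt_O_fact | apply Rpower_pos].
Qed.

Lemma gauss_seq_step x n : 0 < x ->
  gauss_seq x (S (S n)) = gauss_seq x (S n) * gauss_ratio x (INR (S n)).
Proof.
  intros Hx. rewrite !gauss_seq_rising. unfold gauss_ratio.
  set (p := INR (S n)).
  assert (Hp : 0 < p) by (apply lt_0_INR; lia).
  assert (Hsucc : INR (S (S n)) = p + 1) by apply S_INR.
  assert (Hfact : INR (Factorial.fact (S (S n))) = (p + 1) * INR (Factorial.fact (S n))).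
  { change (Factorial.fact (S (S n))) with (S (S n) * Factorial.fact (S n))%nat.
    rewrite mult_INR, Hsucc. reflexivity. }
  assert (Hpow : Rpower (p + 1) x = Rpower p x * Rpower ((p + 1) / p) x).
  { rewrite Rpower_mult_distr by (try apply Rdiv_lt_0_compat; lra). f_equal. field. lra. }
  pose proof (rising_pos x (S (S n)) Hx).
  rewrite (rising_S x (S (S n))), Hsucc, Hfact, Hpow.
  field. repeat split; lra.
Qed.

Lemma gauss_seq_bound x n : 0 < x ->
  gauss_seq x (S n) <= gauss_seq x 1 * exp (x * (x + 1) * (1 - / INR (S n))).
Proof.
  intros Hx. induction n as [| n IH].
  - replace (1 - / INR 1) with 0 by (cbn; field). rewrite Rmult_0_r, exp_0. lra.
  - rewrite gauss_seq_step by exact Hx. rewrite (S_INR (S n)).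
    set (p := INR (S n)) in *.
    assert (Hp : 0 < p) by (apply lt_0_INR; lia).
    replace (x * (x + 1) * (1 - / (p + 1)))
      with (x * (x + 1) * (1 - / p) + x * (x + 1) * (/ p - / (p + 1))) by (field; lra).
    rewrite exp_plus, <- Rmult_assoc.
    apply Rmult_le_compat; [left; apply gauss_seq_pos, Hx | | exact IH |].
    + pose proof (gauss_ratio_ge1 x p Hp Hx). lra.
    + apply gauss_ratio_le; assumption.
Qed.

Lemma gauss_seq_cv x : 0 < x -> exists l, 0 < l /\ Un_cv (gauss_seq x) l.
Proof.
  intros Hx. set (a := fun n => gauss_seq x (S n)).
  assert (Hgrow : Un_growing a).
  { intro n. unfold a. rewrite gauss_seq_step by exact Hx.
    pose proof (gauss_seq_pos x (S n) Hx).
    pose proof (gauss_ratio_ge1 x (INR (S n)) ltac:(apply lt_0_INR; lia) Hx).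
    rewrite <- (Rmult_1_r (gauss_seq x (S n))) at 1. apply Rmult_le_compat_l; lra. }
  assert (Hub : has_ub a).
  { exists (gauss_seq x 1 * exp (x * (x + 1))). intros y [i ->]. unfold a.
    eapply Rle_trans; [apply gauss_seq_bound, Hx |].
    apply Rmult_le_compat_l; [left; apply gauss_seq_pos, Hx |].
    apply exp_monotone.
    assert (0 < / INR (S i)) by (apply Rinv_0_lt_compat, lt_0_INR; lia).
    assert (0 < x * (x + 1)) by (apply Rmult_lt_0_compat; lra). nra. }
  destruct (growing_cv a Hgrow Hub) as [l Hl].
  exists l. split.
  - pose proof (growing_ineq a l Hgrow Hl 0). pose proof (gauss_seq_pos x 1 Hx).
    unfold a in *. lra.
  - intros eps Heps. destruct (Hl eps Heps) as [N HN]. exists (S N). intros n Hn.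
    destruct n as [| n]; [lia |]. apply (HN n). lia.
Qed.

Lemma Gamma_spec x l : Un_cv (gauss_seq x) l -> Gamma x = l.
Proof.
  intros H. unfold Gamma. destruct (excluded_middle_informative _) as [Hex | Hnex].
  - destruct (constructive_indefinite_description _ _) as [l' Hl']. cbn.
    eapply UL_sequence; eassumption.
  - exfalso; apply Hnex; exists l; exact H.
Qed.

Lemma Gamma_pos x : 0 < x -> 0 < Gamma x.
Proof.
  intros Hx. destruct (gauss_seq_cv x Hx) as [l [Hl Hcv]].
  rewrite (Gamma_spec x l Hcv). exact Hl.
Qed.

(* Comparing the Gauss sequences at x+1 and x: their quotient is a
   correction factor tending to x. *)
Lemma gauss_seq_succ_arg x n : 0 < x ->
  gauss_seq (x + 1) (S n) = gauss_seq x (S n) * (x * INR (S n) / (x + INR (S (S n)))).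
Proof.
  intros Hx. rewrite !gauss_seq_rising.
  assert (Hshift : rising (x + 1) (S (S n)) = rising x (S (S (S n))) / x).
  { rewrite <- (rising_shift x (S (S n))). field. lra. }
  assert (Hp : 0 < INR (S n)) by (apply lt_0_INR; lia).
  assert (0 < INR (S (S n))) by (apply lt_0_INR; lia).
  pose proof (rising_pos x (S (S n)) Hx).
  rewrite Hshift, (rising_S x (S (S n))), Rpower_plus, Rpower_1 by exact Hp.
  field. repeat split; lra.
Qed.

Lemma gauss_correction_cv x : 0 < x ->
  Un_cv (fun n => x * INR (S n) / (x + INR (S (S n)))) x.
Proof.
  intros Hx eps Heps.
  destruct (INR_unbounded (x * (x + 1) / eps)) as [N HN]. exists N. intros n Hn.
  unfold Rdist. rewrite (S_INR (S n)). set (p := INR (S n)).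
  assert (Hp : INR N <= p) by (apply le_INR; lia).
  assert (Hp0 : 0 < p) by (apply lt_0_INR; lia).
  assert (Hxx : 0 < x * (x + 1)) by (apply Rmult_lt_0_compat; lra).
  replace (x * p / (x + (p + 1)) - x) with (- (x * (x + 1) / (x + (p + 1)))) by (field; lra).
  rewrite Rabs_Ropp, Rabs_pos_eq by (left; apply Rdiv_lt_0_compat; lra).
  apply Rlt_le_trans with (x * (x + 1) / (x * (x + 1) / eps)).
  - apply Rmult_lt_compat_l; [exact Hxx |].
    apply Rinv_lt_contravar; [| lra].
    apply Rmult_lt_0_compat; [apply Rdiv_lt_0_compat |]; lra.
  - right. field. lra.
Qed.

Lemma Gamma_succ x : 0 < x -> Gamma (x + 1) = x * Gamma x.
Proof.
  intros Hx. destruct (gauss_seq_cv x Hx) as [l [_ Hcv]].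
  rewrite (Gamma_spec x l Hcv). apply Gamma_spec.
  assert (Hcv' : Un_cv (fun n => gauss_seq x (S n)) l).
  { intros eps Heps. destruct (Hcv eps Heps) as [N HN]. exists N. intros; apply HN; lia. }
  pose proof (CV_mult _ _ _ _ Hcv' (gauss_correction_cv x Hx)) as Hprod.
  intros eps Heps. destruct (Hprod eps Heps) as [N HN]. exists (S N). intros n Hn.
  destruct n as [| n]; [lia |].
  rewrite gauss_seq_succ_arg, (Rmult_comm x l) by exact Hx. apply HN. lia.
Qed.

Lemma Gamma_add_nat z n : 0 < z -> Gamma (z + INR n) = Gamma z * rising z n.
Proof.
  intros Hz. induction n as [| n IH].
  - cbn. rewrite Rplus_0_r. ring.
  - rewrite S_INR, <- Rplus_assoc, Gamma_succ, IH, rising_S; [ring |].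
    pose proof (pos_INR n). lra.
Qed.

(* The factor of c'(lambda) attached to one root, as a function of
   l = lambda_alpha, with x = m_{alpha/2}/4 + 1/2, y = m_{alpha/2}/4 + m_alpha/2. *)
Definition c_factor (x y l : R) : R :=
  Rpower 2 (-2 * l) * Gamma (2 * l) / (Gamma (l + x) * Gamma (l + y)).

Lemma c_factor_pos x y l : 0 < l -> 0 < l + x -> 0 < l + y -> 0 < c_factor x y l.
Proof.
  intros Hl Hx Hy. unfold c_factor.
  pose proof (Rpower_pos 2 (-2 * l)). pose proof (Gamma_pos (2 * l) ltac:(lra)).
  pose proof (Gamma_pos _ Hx). pose proof (Gamma_pos _ Hy).
  apply Rdiv_lt_0_compat; apply Rmult_lt_0_compat; assumption.
Qed.

Lemma c_factor_shift x y c K : 0 < c -> 0 < c + x -> 0 < c + y ->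
  c_factor x y (INR K + c) / c_factor x y c =
  rising (2 * c) (K + K) / (4 ^ K * rising (c + x) K * rising (c + y) K).
Proof.
  intros Hc Hx Hy. unfold c_factor.
  assert (Hpow2 : Rpower 2 (-2 * (INR K + c)) = Rpower 2 (-2 * c) / 4 ^ K).
  { replace (-2 * (INR K + c)) with (-2 * c + - (2 * INR K)) by ring.
    rewrite Rpower_plus, Rpower_Ropp, <- (Rpower_mult 2 2 (INR K)).
    replace (Rpower 2 2) with 4 by (change 2 with (INR 2) at 2; rewrite Rpower_pow by lra; ring).
    rewrite Rpower_pow by lra. reflexivity. }
  rewrite Hpow2.
  replace (2 * (INR K + c)) with (2 * c + INR (K + K)) by (rewrite plus_INR; ring).
  replace (INR K + c + x) with (c + x + INR K) by ring.
  replace (INR K + c + y) with (c + y + INR K) by ring.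
  rewrite !Gamma_add_nat by lra.
  pose proof (Rpower_pos 2 (-2 * c)). pose proof (Gamma_pos (2 * c) ltac:(lra)).
  pose proof (Gamma_pos _ Hx). pose proof (Gamma_pos _ Hy).
  pose proof (rising_pos _ K Hx). pose proof (rising_pos _ K Hy).
  pose proof (rising_pos (2 * c) (K + K) ltac:(lra)).
  assert (4 ^ K <> 0) by (apply pow_nonzero; lra).
  field. repeat split; lra.
Qed.

Lemma rising_quotient_product x y c K : 0 < c -> 0 < c + x -> 0 < c + y ->
  rising (2 * c) (K + K) / (4 ^ K * rising (c + x) K * rising (c + y) K) =
  / (((1 + x / c) * (1 + y / c)) ^ K) *
  lprod (fun j => ((1 + INR j / (2 * c)) * (1 + (INR K + INR j) / (2 * c))) /
                  ((1 + INR j / (x + c)) * (1 + INR j / (y + c)))) (seq 0 K).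
Proof.
  intros Hc Hx Hy.
  rewrite rising_add. unfold rising.
  replace (4 ^ K) with (lprod (fun _ => 4) (seq 0 K))
    by (rewrite lprod_const, length_seq; reflexivity).
  replace (/ (((1 + x / c) * (1 + y / c)) ^ K))
    with (lprod (fun _ => / ((1 + x / c) * (1 + y / c))) (seq 0 K))
    by (rewrite lprod_const, length_seq, pow_inv; reflexivity).
  rewrite <- !lprod_mult.
  rewrite lprod_div.
  2: { intros j _. pose proof (pos_INR j).
       apply Rgt_not_eq, Rmult_lt_0_compat; [apply Rmult_lt_0_compat |]; lra. }
  apply lprod_ext_in. intros j _. pose proof (pos_INR j).
  field. repeat split; lra.
Qed.

Definition xroot (m : vec -> nat) (a : vec) : R := (INR (m (vscale (1/2) a)) + 2) / 4.
Definition yroot (m : vec -> nat) (a : vec) : R :=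
  (INR (m (vscale (1/2) a)) + 2 * INR (m a)) / 4.

Lemma cprime_as_product Sigma h m lam :
  cprime Sigma h m lam =
  lprod (fun a => c_factor (xroot m a) (yroot m a) (coef lam a)) (posroots0 Sigma h).
Proof.
  apply lprod_ext_in. intros a _. unfold c_factor, xroot, yroot. cbv zeta.
  f_equal. f_equal; f_equal; lra.
Qed.

Lemma ip_vadd u v w : length u = length v -> ip (vadd u v) w = ip u w + ip v w.
Proof.
  revert v w. induction u as [| x u IH]; intros [| y v] w Hlen; try discriminate.
  - unfold ip, vadd; cbn; ring.
  - destruct w as [| z w]; [unfold ip, vadd; cbn; ring |].
    injection Hlen as Hlen. unfold ip, vadd in *. cbn. rewrite IH by exact Hlen. ring.
Qed.

Lemma coef_vadd u v a : length u = length v -> coef (vadd u v) a = coef u a + coef v a.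
Proof. intros Hlen. unfold coef. rewrite ip_vadd by exact Hlen. unfold Rdiv. ring. Qed.

(* rho has the length r of the roots, so coef_vadd applies to mu + rho. *)
Lemma length_vsum r (g : vec -> vec) l : (forall a, In a l -> length (g a) = r) ->
  length (fold_right vadd (vzero r) (map g l)) = r.
Proof.
  induction l as [| a l IH]; intros Hg; cbn.
  - apply repeat_length.
  - unfold vadd at 1. rewrite length_map, length_combine, IH.
    + rewrite Hg by (left; reflexivity). apply Nat.min_id.
    + intros b Hb. apply Hg. right. exact Hb.
Qed.

Lemma length_rho r Sigma h m :
  restricted_root_data r Sigma h m -> length (rho r Sigma h m) = r.
Proof.
  intros [_ [Hroots _]]. unfold rho, vscale. rewrite length_map.
  apply length_vsum. intros a Ha. rewrite length_map.
  apply filter_In in Ha. apply Hroots, Ha.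
Qed.

(* Since rho_alpha > 0 and x_alpha, y_alpha >= 0, all Gamma arguments met
   are positive. *)
Lemma root_shifts_pos m a c :
  0 < c -> 0 < c + xroot m a /\ 0 < c + yroot m a.
Proof.
  intros Hc. unfold xroot, yroot.
  pose proof (pos_INR (m (vscale (1/2) a))). pose proof (pos_INR (m a)). split; lra.
Qed.

Theorem theorem3p5 (r : nat) (Sigma : list vec) (h : vec) (m : vec -> nat)
  (Hdata : restricted_root_data r Sigma h m)
  (Hrho : forall a, In a (posroots Sigma h) -> 0 < coef (rho r Sigma h m) a)
  (mu : vec) (Hmu : Lambda_plus r Sigma h mu) :
  (forall a, In a (posroots0 Sigma h) -> exists n : nat, coef mu a = INR n) /\
  (forall k : vec -> nat,
     (forall a, In a (posroots0 Sigma h) -> coef mu a = INR (k a)) ->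
     cfun r Sigma h m (vadd mu (rho r Sigma h m)) =
     lprod (fun a =>
        let ra := coef (rho r Sigma h m) a in
        let xa := (INR (m (vscale (1/2) a)) + 2) / 4 in
        let ya := (INR (m (vscale (1/2) a)) + 2 * INR (m a)) / 4 in
        / (((1 + xa / ra) * (1 + ya / ra)) ^ (k a)) *
        lprod (fun j =>
           ((1 + INR j / (2 * ra)) * (1 + (INR (k a) + INR j) / (2 * ra))) /
           ((1 + INR j / (xa + ra)) * (1 + INR j / (ya + ra))))
          (seq 0 (k a)))
       (posroots0 Sigma h)).
Proof.
  destruct Hmu as [Hlen Hint].
  assert (Hlen_eq : length mu = length (rho r Sigma h m))
    by (rewrite Hlen, length_rho by exact Hdata; reflexivity).
  assert (Hrho0 : forall a, In a (posroots0 Sigma h) -> 0 < coef (rho r Sigma h m) a).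
  { intros a Ha. apply filter_In in Ha. apply Hrho, Ha. }
  split.
  - intros a Ha. apply filter_In in Ha. apply Hint, Ha.
  - intros k Hk. unfold cfun. rewrite !cprime_as_product, lprod_div.
    2: { intros a Ha. destruct (root_shifts_pos m a _ (Hrho0 a Ha)).
         apply Rgt_not_eq, c_factor_pos; auto. }
    apply lprod_ext_in. intros a Ha. cbv beta zeta.
    destruct (root_shifts_pos m a _ (Hrho0 a Ha)).
    rewrite coef_vadd by exact Hlen_eq.
    rewrite Hk, c_factor_shift, rising_quotient_product by auto.
    reflexivity.
Qed.
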